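(* Let $N$ be a free abelian group of finite rank $n$ with a homomorphism $\psi:N\to\mathbb{Z}^2$ with finite cokernel, $K=\ker\psi$, $\langle a,b\rangle=\det(\psi(a),\psi(b))$. Let $\tilde{\mathbf{s}}=(e_i)_{1\le i\le n}$ be a cyclically ordered seed with underlying seed $\mathbf{s}$, and let $\mathscr{S}$ be the mutation equivalence class of $\mathbf{s}$. Then for all $\alpha,\beta\in K$, $(\alpha,\beta)_{\mathscr{S}}=-\chi_{\tilde{\mathbf{s}}}(\alpha,\beta)$.
   Context: A seed is an unordered basis $\{e_i\}$ of $N$ with each $\psi(e_i)$ nonzero primitive; seeds are mutation equivalent if related by finitely many mutations $\mu_j^\epsilon$ ($e_j\mapsto-e_j$, $e_i\mapsto e_i+[\epsilon\langle e_i,e_j\rangle]_+e_j$ for $i\ne j$, $[a]_+=\max(0,a)$, $\epsilon\in\{\pm\}$). A cyclic ordering of a seed is an ordering $(e_1,\dots,e_n)$ for which there are determinations $\theta_i$ of the arguments of $\psi(e_i)\in\mathbb{R}^2=\mathbb{C}$ with $\theta_1\le\theta_2\le\cdots\le\theta_n\le\theta_1+2\pi$. The bilinear form $\chi_{\tilde{\mathbf{s}}}$ on $N$ is defined by $\chi_{\tilde{\mathbf{s}}}(e_i,e_j)=1$ if $i=j$, $\langle e_i,e_j\rangle$ if $i>j$, $0$ if $i<j$. Intersection form: choose a smooth complete fan containing the rays $\mathbb{R}_{\ge0}\psi(e_i)$, with toric surface $\overline{Y}$, toric divisors $\overline{D}_\rho$, and $\overline{D}_i$ the divisor of the ray of $\psi(e_i)$;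 blow up distinct points $p_i\in\overline{D}_i$ that are smooth points of the toric boundary to get $\pi:Y\to\overline{Y}$ with exceptional curves $E_i$. For $a=\sum a_ie_i\in K$ set $\iota_\pi(a)=\pi^*C_a-\sum a_iE_i$, where $C_a\in NS(\overline{Y})$ is the unique class with $C_a\cdot\overline{D}_\rho=\sum_{i:\overline{D}_i=\overline{D}_\rho}a_i$ for each ray $\rho$. Then $(a,b)_{\mathscr{S}}:=\iota_\pi(a)\cdot\iota_\pi(b)$ (this depends only on $\mathscr{S}$). *)

From Stdlib Require Import Reals.
From mathcomp Require Import all_boot all_order all_algebra.
From mathcomp Require Import Rstruct.
Set Implicit Arguments. Unset Strict Implicit. Unset Printing Implicit Defensive.
Import Order.TTheory GRing.Theory Num.Theory.

Local Open Scope ring_scope.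

Definition det2 (p q : int * int) : int := p.1 * q.2 - p.2 * q.1.

Definition primitive2 (p : int * int) : Prop := gcdz p.1 p.2 = 1.

Definition has_arg (p : int * int) (t : R) : Prop :=
  exists r : R, (0 < r)%R /\ (p.1%:~R : R) = (r * cos t)%R /\ (p.2%:~R : R) = (r * sin t)%R.

(* The data: N = Z^n with basis e_0..e_{n-1} (the seed), and psi given by
   v i = psi(e_i).  An element a of N is its coordinate vector a : 'I_n -> int. *)
Definition psi_of n (v : 'I_n -> int * int) (a : 'I_n -> int) : int * int :=
  (\sum_(i < n) a i * (v i).1, \sum_(i < n) a i * (v i).2).

Definition in_K n (v : 'I_n -> int * int) (a : 'I_n -> int) : Prop :=
  psi_of v a = (0, 0).

(* psi : N -> Z^2 has finite cokernel: some positive d kills Z^2 / psi(N). *)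
Definition finite_coker n (v : 'I_n -> int * int) : Prop :=
  exists d : nat, (0 < d)%N /\
    forall w : int * int, exists a : 'I_n -> int,
      psi_of v a = ((d%:Z) * w.1, (d%:Z) * w.2).

Definition is_seed n (v : 'I_n -> int * int) : Prop :=
  forall i, primitive2 (v i).

Definition cyclic_ordering n (v : 'I_n -> int * int) : Prop :=
  exists theta : 'I_n -> R,
    (forall i, has_arg (v i) (theta i)) /\
    (forall i j : 'I_n, (i <= j)%N -> (theta i <= theta j)%R) /\
    (forall i j : 'I_n, (theta j <= theta i + 2 * PI)%R).

Definition chi_basis n (v : 'I_n -> int * int) (i j : 'I_n) : int :=
  if i == j then 1 else if (j < i)%N then det2 (v i) (v j) else 0.

Definition chi n (v : 'I_n -> int * int) (a b : 'I_n -> int) : int :=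
  \sum_(i < n) \sum_(j < n) a i * b j * chi_basis v i j.

(* A smooth complete fan in R^2 with rays spanned by u 0, ..., u (m-1), listed
   counterclockwise (strictly increasing arguments within one turn), each
   consecutive pair a Z-basis of Z^2 with positive orientation. *)
Definition smooth_complete_fan m (u : 'I_m -> int * int) : Prop :=
  (3 <= m)%N /\
  (forall k, primitive2 (u k)) /\
  (forall k : 'I_m, det2 (u k) (u (ordS k)) = 1) /\
  exists phi : 'I_m -> R,
    (forall k, has_arg (u k) (phi k)) /\
    (forall k l : 'I_m, (k < l)%N -> (phi k < phi l)%R) /\
    (forall k l : 'I_m, (phi l < phi k + 2 * PI)%R).

Definition fan_contains n (v : 'I_n -> int * int) m (u : 'I_m -> int * int) : Prop :=
  forall i, exists k, u k = v i.

(* Intersection numbers of toric divisors on the smooth complete toric surface: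
   D_k . D_l = 1 for adjacent rays, D_k^2 = -a_k where
   u_{k-1} + u_{k+1} = a_k u_k, i.e. a_k = det(u_{k-1}, u_{k+1}) (as det(u_k,u_{k+1}) = 1),
   and 0 otherwise. *)
Definition toric_int m (u : 'I_m -> int * int) (k l : 'I_m) : int :=
  if k == l then - det2 (u (ord_pred k)) (u (ordS k))
  else if (l == ordS k) || (l == ord_pred k) then 1 else 0.

(* Classes in NS(Ybar) = Pic(Ybar) are represented by c : 'I_m -> int, the class
   sum_k c_k D_k.  Intersection of two such classes: *)
Definition toric_pairing m (u : 'I_m -> int * int) (c c' : 'I_m -> int) : int :=
  \sum_(k < m) \sum_(l < m) c k * c' l * toric_int u k l.

Definition dot_divisor m (u : 'I_m -> int * int) (c : 'I_m -> int) (l : 'I_m) : int :=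
  \sum_(k < m) c k * toric_int u k l.

(* c represents C_a: C_a . D_rho = sum_{i : Dbar_i = Dbar_rho} a_i for every ray rho
   (Dbar_i = Dbar_rho iff psi(e_i) = u_rho, both being primitive). *)
Definition represents_Ca n (v : 'I_n -> int * int) m (u : 'I_m -> int * int)
    (a : 'I_n -> int) (c : 'I_m -> int) : Prop :=
  forall l : 'I_m, dot_divisor u c l = \sum_(i < n | v i == u l) a i.

(* iota_pi(a) . iota_pi(b) = (pi^* C_a - sum a_i E_i).(pi^* C_b - sum b_i E_i)
   = C_a . C_b - sum_i a_i b_i, since pi^* C . E_i = 0, E_i.E_j = -delta_ij. *)
Definition iota_pairing n (v : 'I_n -> int * int) m (u : 'I_m -> int * int)
    (a b : 'I_n -> int) (c c' : 'I_m -> int) : int :=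
  toric_pairing u c c' - \sum_(i < n) a i * b i.

From Stdlib Require Import Reals.
From mathcomp Require Import all_boot all_order all_algebra.
From mathcomp Require Import Rstruct.
From mathcomp Require Import ring lra zify.
Import Order.TTheory GRing.Theory Num.Theory.
Set Implicit Arguments. Unset Strict Implicit. Unset Printing Implicit Defensive.
Local Open Scope ring_scope.

(* Write [r i] for the ray of the fan through psi(e_i), and push a in K forward to the
   rays: A_l = sum_(r i = l) a_i, so that sum_l A_l u_l = 0.  On the smooth toric surface
   the class C_a = sum_k (sum_(j < k) A_j det(u_j, u_k)) D_k satisfies C_a . D_l = A_l,
   because u_(l-1) + u_(l+1) = det(u_(l-1), u_(l+1)) u_l.  Hence
     (alpha, beta) = C_alpha . C_beta - sum_i alpha_i beta_i
                   = sum_(i,j) alpha_i beta_j [r i < r j] det(v_i, v_j) - sum_i alpha_i beta_i.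
   Writing the argument of psi(e_i) as phi_(r i) + 2 pi q_i, with phi the angles of the
   fan, the cyclic ordering gives [r i < r j] + [j < i] = 1 + q_i - q_j whenever
   r i <> r j; the terms (1 + q_i - q_j) det(v_i, v_j) sum to zero against alpha, beta in
   K, and what is left is -chi(alpha, beta). *)

Lemma modn_addn_neq (l k m : nat) : (l < m)%N -> (0 < k < m)%N -> ((l + k) %% m != l)%N.
Proof.
move=> hl /andP[k0 km]; rewrite -{2}(modn_small hl) -{2}[l]addn0 eqn_modDl mod0n.
by rewrite modn_small // -lt0n.
Qed.

Lemma ordS_neq m (l : 'I_m) : (1 < m)%N -> ordS l != l.
Proof. by move=> m_gt1; rewrite -val_eqE /= -addn1 modn_addn_neq. Qed.

Lemma ord_pred_neq m (l : 'I_m) : (1 < m)%N -> ord_pred l != l.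
Proof. by move=> m_gt1; rewrite -(inj_eq (@ordS_inj m)) ord_predK eq_sym ordS_neq. Qed.

Lemma ordS_neq_ord_pred m (l : 'I_m) : (2 < m)%N -> ordS l != ord_pred l.
Proof.
move=> m_gt2; rewrite -(inj_eq (@ordS_inj m)) ord_predK -val_eqE /=.
by rewrite -[_.+1]addn1 modnDml -addn1 -addnA modn_addn_neq.
Qed.

Lemma eq_ordS m (k l : 'I_m) : (l == ordS k) = (k == ord_pred l).
Proof. by rewrite -(inj_eq (@ord_pred_inj m)) ordSK eq_sym. Qed.

Lemma sum_ord_ltS (V : nmodType) m (F : 'I_m -> V) (k : 'I_m) :
  \sum_(j < m | (j < k.+1)%N) F j = \sum_(j < m | (j < k)%N) F j + F k.
Proof.
rewrite (bigD1 k) //= addrC; congr (_ + _); apply: eq_bigl => j.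
by rewrite ltnS ltn_neqAle andbC -val_eqE.
Qed.

Lemma det2xx p : det2 p p = 0.
Proof. by rewrite /det2 mulrC subrr. Qed.

Lemma det2_plucker w x y z :
  det2 x y * det2 w z + det2 y z * det2 w x + det2 z x * det2 w y = 0.
Proof. by rewrite /det2; ring. Qed.

Lemma det2_psi_ofl n (v : 'I_n -> int * int) a w :
  \sum_(i < n) a i * det2 (v i) w = det2 (psi_of v a) w.
Proof. by rewrite /det2 /psi_of /= !mulr_suml -sumrB; apply: eq_bigr => i _; ring. Qed.

Lemma det2_psi_ofr n (v : 'I_n -> int * int) a w :
  \sum_(i < n) a i * det2 w (v i) = det2 w (psi_of v a).
Proof. by rewrite /det2 /psi_of /= !mulr_sumr -sumrB; apply: eq_bigr => i _; ring. Qed.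

Lemma det2_psi_of_kerl n (v : 'I_n -> int * int) a w :
  in_K v a -> \sum_(i < n) a i * det2 (v i) w = 0.
Proof. by rewrite det2_psi_ofl => ->; rewrite /det2 !mul0r subrr. Qed.

Lemma det2_psi_of_kerr n (v : 'I_n -> int * int) a w :
  in_K v a -> \sum_(i < n) a i * det2 w (v i) = 0.
Proof. by rewrite det2_psi_ofr => ->; rewrite /det2 !mulr0 subrr. Qed.

Lemma sum_det2_ker_sep n (v : 'I_n -> int * int) a b (f g : 'I_n -> int) :
  in_K v a -> in_K v b ->
  \sum_(i < n) \sum_(j < n) a i * b j * ((f i + g j) * det2 (v i) (v j)) = 0.
Proof.
move=> Ka Kb.
rewrite (eq_bigr (fun i => a i * f i * \sum_(j < n) b j * det2 (v i) (v j)
    + \sum_(j < n) g j * b j * (a i * det2 (v i) (v j)))); last first.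
  by move=> i _; rewrite mulr_sumr -big_split; apply: eq_bigr => j _ /=; ring.
rewrite big_split big1 ?add0r => [|i _]; last by rewrite det2_psi_of_kerr // mulr0.
by rewrite exchange_big big1 // => j _; rewrite -mulr_sumr det2_psi_of_kerl // mulr0.
Qed.

Section ToricSurface.
Variables (m : nat) (u : 'I_m -> int * int).

Lemma toric_int_sym k l : toric_int u k l = toric_int u l k.
Proof.
rewrite /toric_int; have [->//|kl] := eqVneq k l.
by rewrite (eq_ordS k l) -(eq_ordS l k) orbC.
Qed.

Lemma toric_pairing_dotl c c' :
  toric_pairing u c c' = \sum_(l < m) c' l * dot_divisor u c l.
Proof.
rewrite /toric_pairing exchange_big; apply: eq_bigr => l _.
by rewrite /dot_divisor mulr_sumr; apply: eq_bigr => k _; ring.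
Qed.

Lemma toric_pairing_dotr c c' :
  toric_pairing u c c' = \sum_(k < m) c k * dot_divisor u c' k.
Proof.
apply: eq_bigr => k _; rewrite /dot_divisor mulr_sumr.
by apply: eq_bigr => l _; rewrite toric_int_sym; ring.
Qed.

(* The pairing sees each argument only through its intersections with the [D_k], so no
   uniqueness of the representing class is needed. *)
Lemma represents_toric_pairing n (v : 'I_n -> int * int) a b c c' c0 :
  represents_Ca v u a c -> represents_Ca v u b c' -> represents_Ca v u a c0 ->
  toric_pairing u c c' = \sum_(k < m) c0 k * \sum_(i < n | v i == u k) b i.
Proof.
move=> hc hc' hc0; rewrite toric_pairing_dotl.
under eq_bigr do rewrite hc -hc0.
by rewrite -toric_pairing_dotl toric_pairing_dotr; under eq_bigr do rewrite hc'.
Qed.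

Definition toric_class (A : 'I_m -> int) (k : 'I_m) : int :=
  \sum_(j < m | (j < k)%N) A j * det2 (u j) (u k).

Lemma sum_ord_lt_ordS A (p : 'I_m) w : in_K u A ->
  \sum_(j < m | (j < ordS p)%N) A j * det2 (u j) w
  = \sum_(j < m | (j < p.+1)%N) A j * det2 (u j) w.
Proof.
move=> KA; have [lt_pm|] := ltnP p.+1 m; first by apply: eq_bigl => j; rewrite /= modn_small.
rewrite leq_eqVlt ltnNge ltn_ord orbF => /eqP e.
(* At the wrap-around [p = m - 1] the left sum is empty and the right one is
   [det2 (psi_of u A) w = 0]. *)
rewrite big_pred0 => [|j]; last by rewrite /= -[p.+1]e modnn.
by rewrite (eq_bigl xpredT) ?det2_psi_of_kerl // => j; rewrite -e ltn_ord.
Qed.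

Hypothesis m_ge3 : (3 <= m)%N.

Lemma dot_divisorE c l :
  dot_divisor u c l
  = c (ord_pred l) + c (ordS l) - det2 (u (ord_pred l)) (u (ordS l)) * c l.
Proof.
have m_gt1 : (1 < m)%N := ltnW m_ge3.
rewrite /dot_divisor (bigD1 l) // (bigD1 (ord_pred l)) ?ord_pred_neq //=.
rewrite (bigD1 (ordS l)) ?ordS_neq ?ordS_neq_ord_pred //= big1 ?addr0; last first.
  move=> k /andP[/andP[kl kp] ks]; rewrite /toric_int (negbTE kl).
  by rewrite (eq_ordS k l) -(eq_ordS l k) (negbTE kp) (negbTE ks) mulr0.
rewrite /toric_int eqxx (negbTE (ord_pred_neq _ _)) // (negbTE (ordS_neq _ _)) //.
by rewrite ord_predK ordSK !eqxx orbT; ring.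
Qed.

Hypothesis det2_ordS : forall k, det2 (u k) (u (ordS k)) = 1.

Lemma dot_toric_class A l : in_K u A -> dot_divisor u (toric_class A) l = A l.
Proof.
move=> KA; set p := ord_pred l; set s := ordS l.
have det2_pl : det2 (u p) (u l) = 1 by have := det2_ordS p; rewrite ord_predK.
have plucker j : det2 (u j) (u p) + det2 (u j) (u s) - det2 (u p) (u s) * det2 (u j) (u l) = 0.
  have := det2_plucker (u j) (u p) (u l) (u s); rewrite det2_pl det2_ordS /det2 => <-; ring.
have class_p : toric_class A p = \sum_(j < m | (j < l)%N) A j * det2 (u j) (u p).
  by rewrite -(ord_predK l) -/p sum_ord_lt_ordS // sum_ord_ltS det2xx mulr0 addr0.
have class_s : toric_class A s = \sum_(j < m | (j < l)%N) A j * det2 (u j) (u s) + A l.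
  by rewrite /toric_class sum_ord_lt_ordS // sum_ord_ltS det2_ordS mulr1.
have sum0 : \sum_(j < m | (j < l)%N) (A j * det2 (u j) (u p) + A j * det2 (u j) (u s)
    - det2 (u p) (u s) * (A j * det2 (u j) (u l))) = 0.
  by rewrite big1 // => j _; rewrite -[RHS](mulr0 (A j)) -(plucker j); ring.
rewrite dot_divisorE // -/p -/s class_p class_s; apply/eqP; rewrite -subr_eq0.
by rewrite -[X in _ == X]sum0 sumrB big_split -mulr_sumr /=; apply/eqP; ring.
Qed.

End ToricSurface.

Section Pushforward.
Variables (n m : nat) (r : 'I_n -> 'I_m).

Definition pushforward (a : 'I_n -> int) (l : 'I_m) : int := \sum_(i < n | r i == l) a i.

Lemma sum_pushforward a (Y : 'I_m -> int) :
  \sum_(l < m) pushforward a l * Y l = \sum_(i < n) a i * Y (r i).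
Proof.
rewrite (partition_big r xpredT) //=; apply: eq_bigr => l _.
by rewrite mulr_suml; apply: eq_bigr => i /eqP ->.
Qed.

Variables (v : 'I_n -> int * int) (u : 'I_m -> int * int).
Hypothesis ur : forall i, u (r i) = v i.

Lemma pushforwardE a l : injective u ->
  \sum_(i < n | v i == u l) a i = pushforward a l.
Proof. by move=> u_inj; apply: eq_bigl => i; rewrite -ur (inj_eq u_inj). Qed.

Lemma psi_of_pushforward a : psi_of u (pushforward a) = psi_of v a.
Proof. by rewrite /psi_of !sum_pushforward; congr pair; apply: eq_bigr => i _; rewrite ur. Qed.

Lemma toric_class_pushforward a j :
  toric_class u (pushforward a) (r j)
  = \sum_(i < n) a i * ((r i < r j)%:R * det2 (v i) (v j)).
Proof.
rewrite /toric_class big_mkcond /=.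
rewrite (eq_bigr (fun k => pushforward a k * ((k < r j)%:R * det2 (u k) (u (r j))))).
  by rewrite sum_pushforward; apply: eq_bigr => i _; rewrite !ur.
by move=> k _; case: ifP => _; rewrite ?mul1r ?mul0r ?mulr0.
Qed.

End Pushforward.

Lemma PI_gt0 : 0 < PI.
Proof. exact/RltP/PI_RGT_0. Qed.

Lemma cos2_sin2 (x : R) : cos x * cos x + sin x * sin x = 1.
Proof. by have := sin2_cos2 x; rewrite /Rsqr !RealsE addrC. Qed.

Lemma IZR_intr (k : Z) : exists z : int, IZR k = z%:~R.
Proof.
case: k => [|p|p]; first by exists 0.
- by exists (Posz (nat_of_pos p)); rewrite IZRposE INRE.
- by exists (- Posz (nat_of_pos p)); rewrite IZR_NEG IZRposE INRE RoppE mulrNz.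
Qed.

Lemma sin_eq0_cos_gt0 (x : R) :
  sin x = 0 -> 0 < cos x -> exists z : int, x = 2 * PI * z%:~R.
Proof.
have -> : x = 2 * (x / 2) by field.
rewrite sin_2a cos_2a; set a := x / 2; rewrite !RealsE /= => hs hc.
have ca0 : cos a != 0 by apply: contraTneq hc => ->; nra.
have [k hk] : exists k, a = IZR k * PI.
  by apply: sin_eq_0_0; move/eqP: hs; rewrite !mulf_eq0 (negbTE ca0) pnatr_eq0 orbF => /eqP.
have [z hz] := IZR_intr k.
by exists z; rewrite hk hz; ring.
Qed.

Lemma has_arg_diff p t t' :
  has_arg p t -> has_arg p t' -> sin (t' - t) = 0 /\ 0 < cos (t' - t).
Proof.
move=> [r [r0 [h1 h2]]] [r' [r'0 [h1' h2']]].
have rr'0 : 0 < r * r' by rewrite mulr_gt0.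
have hs : r * r' * sin (t' - t) = 0.
  rewrite sin_minus !RealsE.
  transitivity ((r' * sin t') * (r * cos t) - (r' * cos t') * (r * sin t)); first ring.
  by rewrite -h1 -h2 -h1' -h2'; ring.
have hc : r * r' * cos (t' - t) = r * r.
  rewrite cos_minus !RealsE.
  transitivity ((r' * cos t') * (r * cos t) + (r' * sin t') * (r * sin t)); first ring.
  by rewrite -h1' -h2' h1 h2 -[RHS]mulr1 -(cos2_sin2 t); ring.
split; first by move/eqP: hs; rewrite mulf_eq0 gt_eqF //= => /eqP.
by rewrite -(pmulr_rgt0 _ rr'0) hc mulr_gt0.
Qed.

Lemma has_arg_unique p t t' :
  has_arg p t -> has_arg p t' -> exists z : int, t' = t + 2 * PI * z%:~R.
Proof.
move=> ht ht'; have [hs hc] := has_arg_diff ht ht'.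
by have [z hz] := sin_eq0_cos_gt0 hs hc; exists z; rewrite -hz RminusE; ring.
Qed.

Lemma intr_eq_of_bounds (T : numDomainType) (z k : int) :
  (k - 1)%:~R < z%:~R :> T -> z%:~R < (k + 1)%:~R :> T -> z = k.
Proof. by rewrite !ltr_int; lia. Qed.

Lemma winding_step (x x' y y' : R) (z z' : int) :
  x = y + 2 * PI * z%:~R -> x' = y' + 2 * PI * z'%:~R ->
  x <= x' -> x' <= x + 2 * PI -> y' < y + 2 * PI -> y < y' + 2 * PI -> y != y' ->
  z' = z + (y' < y)%O%:R.
Proof.
move=> -> -> hx hx' hy hy'; have pi0 := PI_gt0.
rewrite neq_lt => /orP[lt_yy'|lt_y'y].
- rewrite ltNge (ltW lt_yy') addr0.
  by apply: (@intr_eq_of_bounds R); rewrite ?intrB ?intrD; nra.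
- by rewrite lt_y'y; apply: (@intr_eq_of_bounds R); rewrite ?intrB ?intrD /=; nra.
Qed.

Lemma smooth_complete_fan_inj m (u : 'I_m -> int * int) :
  smooth_complete_fan u -> injective u.
Proof.
move=> [_ [_ [_ [phi [hphi [mono wrap]]]]]].
have lt_neq (k l : 'I_m) : (k < l)%N -> u k != u l.
  move=> lt_kl; apply/eqP => e; have pi0 := PI_gt0.
  have [z hz] : exists z : int, phi l = phi k + 2 * PI * z%:~R.
    by apply: has_arg_unique (hphi k) _; rewrite e.
  have := mono _ _ lt_kl; have := wrap k l; rewrite hz => h1 h2.
  have : 0 < z%:~R :> R by nra.
  have : z%:~R < 1 :> R by nra.
  by rewrite ltr0z ltrz1; lia.
move=> k l e; case: (ltngtP k l) => [h|h|/val_inj //].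
all: by move/lt_neq: h; rewrite e eqxx.
Qed.

Lemma cyclic_ordering_winding n m (v : 'I_n -> int * int) (u : 'I_m -> int * int)
    (r : 'I_n -> 'I_m) :
  smooth_complete_fan u -> cyclic_ordering v -> (forall i, u (r i) = v i) ->
  exists q : 'I_n -> int,
    forall i j : 'I_n, (i <= j)%N -> r i != r j -> q j = q i + (r j < r i)%:R.
Proof.
move=> [_ [_ [_ [phi [hphi [pmono pwrap]]]]]] [theta [htheta [tmono twrap]]] hr.
(* [q i] counts the turns of [theta i] beyond the fan angle [phi (r i)]. *)
have laps i : exists z : int, theta i = phi (r i) + 2 * PI * z%:~R.
  by apply: has_arg_unique (htheta i); rewrite -hr.
have [q hq] := fin_all_exists laps.
have phi_lt (k l : 'I_m) : (phi k < phi l) = (k < l)%N.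
  case: (ltngtP k l) => [h|h|/val_inj ->]; last by rewrite ltxx.
  - exact: pmono.
  - by apply/negbTE; rewrite -leNgt ltW // pmono.
exists q => i j le_ij ne_r; rewrite -phi_lt.
apply: (winding_step (hq i) (hq j) (tmono _ _ le_ij) (twrap i j)); rewrite ?pwrap //.
by rewrite neq_lt !phi_lt -neq_ltn val_eqE.
Qed.

Section WindingOrder.
Variables (n m : nat) (v : 'I_n -> int * int) (u : 'I_m -> int * int).
Variables (r : 'I_n -> 'I_m) (q : 'I_n -> int).
Hypothesis ur : forall i, u (r i) = v i.
Hypothesis q_step : forall i j : 'I_n, (i <= j)%N -> r i != r j -> q j = q i + (r j < r i)%:R.

Lemma order_add_chi_basis i j :
  (r i < r j)%:R * det2 (v i) (v j) + chi_basis v i j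
  = (i == j)%:R + (1 + q i - q j) * det2 (v i) (v j).
Proof.
rewrite /chi_basis; have [<-|ne_ij] := eqVneq i j; first by rewrite det2xx ltnn /=; ring.
have [eq_r|ne_r] := eqVneq (r i) (r j).
  by rewrite -!ur eq_r det2xx if_same !mulr0.
suff <- : ((r i < r j)%:R + (j < i)%:R : int) = 1 + q i - q j.
  by case: (j < i)%N => /=; ring.
case: (ltngtP i j) => [lt_ij|lt_ji|/val_inj eq_ij]; last by rewrite eq_ij eqxx in ne_ij.
- rewrite (q_step (ltnW lt_ij) ne_r).
  by case: (ltngtP (r i) (r j)) => [_|_|/val_inj eq_r] /=; [ring|ring|rewrite eq_r eqxx in ne_r].
- rewrite (q_step (ltnW lt_ji)); last by rewrite eq_sym.
  by case: (ltngtP (r i) (r j)) => [_|_|/val_inj eq_r] /=; [ring|ring|rewrite eq_r eqxx in ne_r].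
Qed.

Lemma order_sum_add_chi a b : in_K v a -> in_K v b ->
  \sum_(j < n) b j * \sum_(i < n) a i * ((r i < r j)%:R * det2 (v i) (v j)) + chi v a b
  = \sum_(i < n) a i * b i.
Proof.
move=> Ka Kb; rewrite /chi.
have -> : \sum_(j < n) b j * \sum_(i < n) a i * ((r i < r j)%:R * det2 (v i) (v j))
    = \sum_(i < n) \sum_(j < n) a i * b j * ((r i < r j)%:R * det2 (v i) (v j)).
  under eq_bigr do rewrite mulr_sumr.
  by rewrite exchange_big; apply: eq_bigr => i _; apply: eq_bigr => j _; ring.
rewrite -big_split /=.
under eq_bigr do rewrite -big_split /=.
under eq_bigr do under eq_bigr do rewrite -mulrDr order_add_chi_basis mulrDr.
under eq_bigr do rewrite big_split /=.
rewrite big_split /= (sum_det2_ker_sep (fun i => 1 + q i) (fun j => - q j)) // addr0.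
apply: eq_bigr => i _; rewrite (bigD1 i) //= eqxx mulr1 big1 ?addr0 // => j.
by rewrite eq_sym => /negbTE ->; rewrite mulr0.
Qed.

End WindingOrder.

Theorem lemma2p4 (n : nat) (v : 'I_n -> int * int)
    (Hseed : is_seed v) (Hcoker : finite_coker v) (Hcyc : cyclic_ordering v)
    (m : nat) (u : 'I_m -> int * int)
    (Hfan : smooth_complete_fan u) (Hcont : fan_contains v u)
    (alpha beta : 'I_n -> int) (Ha : in_K v alpha) (Hb : in_K v beta) :
  (exists c, represents_Ca v u alpha c) /\
  (exists c', represents_Ca v u beta c') /\
  (forall c c', represents_Ca v u alpha c -> represents_Ca v u beta c' ->
     iota_pairing v u alpha beta c c' = - chi v alpha beta).
Proof.
have u_inj := smooth_complete_fan_inj Hfan.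
have [r ur] := fin_all_exists Hcont.
have [q q_step] := cyclic_ordering_winding Hfan Hcyc ur.
have [m_ge3 [_ [det2_ordS _]]] := Hfan.
have rep a : in_K v a -> represents_Ca v u a (toric_class u (pushforward r a)).
  move=> Ka l; rewrite (pushforwardE ur _ _ u_inj) dot_toric_class //.
  by rewrite /in_K (psi_of_pushforward ur).
split; first by exists (toric_class u (pushforward r alpha)); exact: rep.
split; first by exists (toric_class u (pushforward r beta)); exact: rep.
move=> c c' hc hc'.
rewrite /iota_pairing (represents_toric_pairing hc hc' (rep _ Ha)).
under eq_bigr do rewrite (pushforwardE ur _ _ u_inj) mulrC.
rewrite sum_pushforward.
under eq_bigr do rewrite (toric_class_pushforward ur).
by rewrite -(order_sum_add_chi ur q_step Ha Hb); ring.
Qed.
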